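(* Let $S$ be a numerical semigroup with depth $q$, $\rho=qm-c$, minimal generating set $P$, $D=S^*+S^*$, $L=\{s\in S: s<c\}$ and $X$ its set of nonzero Apéry elements. Then $$|P|\,|L|-c\ =\ |P|\,\tau(X)-|X\cap D|\,q+\rho.$$
   Context: A numerical semigroup is a subset $S\subseteq\mathbb N$ containing $0$, closed under addition, with finite complement. $S^*=S\setminus\{0\}$, $m=\min S^*$, $c=\max(\mathbb Z\setminus S)+1$, $q=\lceil c/m\rceil$, $\rho=qm-c$. $P=S^*\setminus D$. $X=\{s\in S^*: s-m\notin S\}$. For $x\in S$, $\delta(x)$ is the unique integer with $x+\delta(x)m\in[c,c+m-1]$, and $\tau(A)=\sum_{x\in A}\delta(x)$. *)

From mathcomp Require Import all_boot all_order all_algebra.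
Set Implicit Arguments. Unset Strict Implicit. Unset Printing Implicit Defensive.
Import Order.TTheory GRing.Theory Num.Theory.

Definition numerical_semigroup (S : pred nat) : Prop :=
  [/\ S 0, (forall a b, S a -> S b -> S (a + b))
    & exists N, forall n, N <= n -> S n].

Definition is_multiplicity (S : pred nat) (m : nat) : Prop :=
  [/\ S m, 0 < m & forall s, S s -> 0 < s -> m <= s].

(* c = max(Z \ S) + 1, i.e. the least c such that every n >= c lies in S *)
Definition is_conductor (S : pred nat) (c : nat) : Prop :=
  (forall n, c <= n -> S n) /\
  (forall k, (forall n, k <= n -> S n) -> c <= k).

Definition Sstar (S : pred nat) : pred nat := fun x => S x && (0 < x).

(* D = S^* + S^* *)
Definition Dset (S : pred nat) : pred nat :=
  fun x => has (fun a => Sstar S a && Sstar S (x - a) && (a < x)) (iota 0 x).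

Definition Pset (S : pred nat) : pred nat :=
  fun x => Sstar S x && ~~ Dset S x.

(* X = { s in S^* : s - m notin S } (nonzero Apery elements w.r.t. m);
   for s in S^* we have s >= m, so nat subtraction is exact *)
Definition Xset (S : pred nat) (m : nat) : pred nat :=
  fun x => Sstar S x && ~~ S (x - m).

Definition Lset (S : pred nat) (c : nat) : pred nat :=
  fun x => S x && (x < c).

(* q = ceil(c/m) *)
Definition depth (m c : nat) : nat := (c + m - 1) %/ m.

Definition rho (m c : nat) : int := ((depth m c * m)%:Z - c%:Z)%R.

(* delta(x) = the unique integer d with x + d m in [c, c+m-1],
   i.e. d = floor((c + m - 1 - x) / m) *)
Definition delta (m c x : nat) : int :=
  ((((c + m - 1)%:Z - x%:Z)%R %/ m%:Z)%Z).

(* tau(A) = sum_{x in A} delta(x), A given by a duplicate-free list *)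
Definition tau (m c : nat) (A : seq nat) : int :=
  (\sum_(x <- A) delta m c x)%R.

From mathcomp Require Import all_boot all_order all_algebra.
From mathcomp Require Import zify ring.
Import Order.TTheory GRing.Theory Num.Theory.
Set Implicit Arguments. Unset Strict Implicit.

(* Let Ap = {0} ∪ X be the Apéry set of S with respect to m: it contains exactly
   one element of each residue class mod m, and n ∈ S iff n ≥ a for the a ∈ Ap
   congruent to n.  Hence |X| = m - 1, and counting the n < c in each class
   gives |L| = Σ_{a ∈ Ap} δ(a) = q + τ(X).  Every element of X other than a sum
   of two elements of S^* is a minimal generator, and so is m, hence
   P = {m} ∪ (X \ D) and |P| = m - |X ∩ D|.  The identity follows by
   substituting these three counts. *)

Definition in_progression (m a n : nat) : bool := (a <= n) && (a %% m == n %% m).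

Lemma count_in_progression_iota_add m a j : 0 < m ->
  count (in_progression m a) (iota 0 (a + j)) = (j + m - 1) %/ m.
Proof.
move=> m_gt0; elim: j => [|j IHj].
  rewrite addn0 (eq_in_count (a2 := pred0)) ?count_pred0.
    by rewrite divn_small //; lia.
  by move=> n; rewrite mem_iota => n_lt_a; apply/negbTE; rewrite /in_progression; lia.
rewrite addnS -addn1 iotaD count_cat IHj /= add0n addn0.
have -> : j.+1 + m - 1 = (j + m - 1).+1 by lia.
rewrite divnS // addnC /in_progression; congr (_ + _).
have -> : (j + m - 1).+1 = j + m by lia.
rewrite leq_addr /= dvdn_addl // -{1}(addn0 a) eqn_modDl mod0n eq_sym.
by rewrite /dvdn; case: (j %% m == 0).
Qed.

Lemma count_in_progression m a c : 0 < m -> a < c + m ->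
  count (in_progression m a) (iota 0 c) = (c + m - 1 - a) %/ m.
Proof.
move=> m_gt0 a_lt; have [a_le_c | c_lt_a] := leqP a c.
  rewrite -(subnKC a_le_c) count_in_progression_iota_add //; congr (_ %/ _); lia.
rewrite (eq_in_count (a2 := pred0)) ?count_pred0; first by rewrite divn_small //; lia.
by move=> n; rewrite mem_iota => n_lt_c; apply/negbTE; rewrite /in_progression; lia.
Qed.

Lemma delta_nat m c x : x < c + m -> delta m c x = (((c + m - 1 - x) %/ m)%:Z)%R.
Proof. by move=> x_lt; rewrite /delta subzn ?divz_nat //; lia. Qed.

Lemma S_addMm (S : pred nat) m a j :
  (forall a b, S a -> S b -> S (a + b)) -> S m -> S a -> S (a + j * m).
Proof.
move=> S_add Sm Sa; elim: j => [|j IHj]; first by rewrite mul0n addn0.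
by rewrite mulSn addnCA; apply: S_add.
Qed.

Lemma Pset_char (S : pred nat) m x : is_multiplicity S m ->
  Pset S x = (x == m) || Xset S m x && ~~ Dset S x.
Proof.
move=> [Sm m_gt0 m_min]; rewrite /Pset /Xset /Dset /Sstar.
have [->|x_neq_m] /= := eqVneq x m.
  rewrite Sm m_gt0 /=; apply/hasPn => a _; apply/negP.
  move=> /andP[/andP[/andP[Sa a_gt0] _] a_lt_m]; have := m_min a Sa a_gt0; lia.
case Sx: (S x); case: (ltnP 0 x) => //= x_gt0; rewrite andbC.
case: hasP => [|not_sum] //=; apply/esym/negP => Sxm; apply: not_sum; exists m.
  by rewrite mem_iota /=; have := m_min x Sx x_gt0; lia.
by rewrite Sm m_gt0 Sxm /=; have := m_min x Sx x_gt0; lia.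
Qed.

Lemma size_Pset (S : pred nat) m lP lX : S 0 -> is_multiplicity S m ->
  uniq lP -> (forall x, (x \in lP) = Pset S x) ->
  uniq lX -> (forall x, (x \in lX) = Xset S m x) ->
  size lP = (count (predC (Dset S)) lX).+1.
Proof.
move=> S0 multS uniq_lP mem_lP uniq_lX mem_lX.
rewrite -size_filter -/(size (m :: _)); apply/perm_size/uniq_perm => //.
  by rewrite /= filter_uniq // mem_filter mem_lX /Xset subnn S0 !andbF.
by move=> x; rewrite mem_lP (Pset_char x multS) in_cons mem_filter mem_lX andbC.
Qed.

Lemma apery_lt (S : pred nat) m c lX : 0 < m -> is_conductor S c ->
  (forall x, (x \in lX) = Xset S m x) -> forall a, a \in 0 :: lX -> a < c + m.
Proof.
move=> m_gt0 [above_c _] mem_lX a.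
rewrite in_cons mem_lX => /predU1P[->|/andP[_ Sam]]; first by lia.
by apply: contraNT Sam; rewrite -leqNgt => le; apply: above_c; lia.
Qed.

Lemma tau_apery (S : pred nat) m c lX : 0 < m -> is_conductor S c ->
  (forall x, (x \in lX) = Xset S m x) ->
  tau m c lX = ((\sum_(x <- lX) (c + m - 1 - x) %/ m)%:Z)%R.
Proof.
move=> m_gt0 condS mem_lX; rewrite -natz natr_sum; apply: eq_big_seq => x Xx.
by rewrite natz delta_nat // (apery_lt m_gt0 condS mem_lX) // inE Xx orbT.
Qed.

Section Apery.

Variables (S : pred nat) (m : nat) (lX : seq nat).
Hypotheses (S0 : S 0) (S_add : forall a b, S a -> S b -> S (a + b)).
Hypothesis multS : is_multiplicity S m.
Hypothesis mem_lX : forall x, (x \in lX) = Xset S m x.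

Local Notation apery := (0 :: lX).

Lemma apery_S a : a \in apery -> S a.
Proof. by rewrite in_cons mem_lX => /predU1P[->|/andP[/andP[]]]. Qed.

Lemma uniq_apery : uniq lX -> uniq apery.
Proof. by move=> uniq_lX; rewrite /= uniq_lX mem_lX /Xset /Sstar ltnn andbF. Qed.

(* If a < b in Ap were congruent mod m, then b - m = a + k m would lie in S. *)
Lemma apery_modn_inj : {in apery &, injective (modn^~ m)}.
Proof.
have [Sm m_gt0 _] := multS.
suff lt_neq a b : a \in apery -> b \in apery -> a < b -> a %% m != b %% m.
  move=> a b Aa Ab /= /eqP eq_mod; apply/eqP; apply: contraTT eq_mod.
  by rewrite neq_ltn => /orP[] lt; [|rewrite eq_sym]; apply: lt_neq.
move=> Aa Ab a_lt_b; apply/negP => /eqP eq_mod.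
have /dvdnP[[|k] diff_eq] : m %| b - a by rewrite -eqn_mod_dvd ?eq_mod // ltnW.
  by lia.
have : b \in lX by move: Ab; rewrite in_cons => /predU1P[b0|]; first lia.
rewrite mem_lX => /andP[_]; apply/negP/negPn.
have -> : b - m = a + k * m by rewrite mulSn in diff_eq; lia.
exact: S_addMm (apery_S Aa).
Qed.

Lemma S_has_apery n : S n = has (in_progression m ^~ n) apery.
Proof.
have [Sm m_gt0 m_min] := multS.
apply/idP/hasP => [|[a Aa /andP[a_le_n /eqP eq_mod]]]; last first.
  have /dvdnP[k diff_eq] : m %| n - a by rewrite -eqn_mod_dvd // eq_mod.
  have -> : n = a + k * m by lia.
  exact: S_addMm (apery_S Aa).
elim/ltn_ind: n => n IHn Sn.
have [->|n_gt0] := posnP n; first by exists 0; rewrite ?mem_head /in_progression ?eqxx.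
have m_le_n := m_min n Sn n_gt0.
case Snm: (S (n - m)); last first.
  exists n; last by rewrite /in_progression leqnn eqxx.
  by rewrite inE mem_lX /Xset /Sstar Sn n_gt0 Snm orbT.
have [|a Aa /andP[a_le /eqP eq_mod]] := IHn (n - m) _ Snm; first by lia.
exists a; rewrite // /in_progression -(subnK m_le_n) modnDr eq_mod eqxx andbT.
by lia.
Qed.

Lemma S_count_apery n : uniq lX -> S n = count (in_progression m ^~ n) apery :> nat.
Proof.
move=> uniq_lX; have count_le1 : count (in_progression m ^~ n) apery <= 1.
  rewrite -size_filter -(size_map (modn^~ m)) -[1]/(size [:: n %% m]).
  apply: uniq_leq_size => [|r /mapP[a]]; last first.
    by rewrite mem_filter /in_progression => /andP[/andP[_ /eqP <-] _] ->; rewrite mem_head.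
  rewrite map_inj_in_uniq ?filter_uniq ?uniq_apery // => a b.
  by rewrite !mem_filter => /andP[_ Aa] /andP[_ Ab]; apply: apery_modn_inj.
by rewrite S_has_apery has_count; case: (count _ _) count_le1 => [|[]].
Qed.

Variable c : nat.
Hypothesis condS : is_conductor S c.

(* c m + r >= c lies in S, so each residue r < m is the residue of an element of Ap. *)
Lemma size_apery : uniq lX -> size apery = m.
Proof.
move=> uniq_lX; have [Sm m_gt0 _] := multS; case: condS => above_c _.
suff /perm_size : perm_eq (map (modn^~ m) apery) (iota 0 m) by rewrite size_map size_iota.
apply: uniq_perm.
- by rewrite map_inj_in_uniq ?uniq_apery //; apply: apery_modn_inj.
- exact: iota_uniq.
move=> r; rewrite mem_iota add0n leq0n andTb; apply/idP/idP => [/mapP[a _ ->]|r_lt_m].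
  exact: ltn_pmod.
apply/mapP.
have /hasP[a Aa /andP[_ /eqP eq_mod]] : has (in_progression m ^~ (c * m + r)) apery.
  by rewrite -S_has_apery; apply: above_c; nia.
by exists a; rewrite // eq_mod modnMDl modn_small.
Qed.

Lemma size_Lset lL : uniq lX -> uniq lL -> (forall x, (x \in lL) = Lset S c x) ->
  size lL = \sum_(a <- apery) (c + m - 1 - a) %/ m.
Proof.
move=> uniq_lX uniq_lL mem_lL; have [_ m_gt0 _] := multS.
have -> : size lL = count S (iota 0 c).
  rewrite -size_filter; apply/perm_size/uniq_perm => //.
    by rewrite filter_uniq ?iota_uniq.
  by move=> x; rewrite mem_filter mem_iota mem_lL /Lset add0n.
rewrite -sumn_count sumnE big_map.
under eq_bigr do rewrite S_count_apery // -sumn_count sumnE big_map.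
rewrite exchange_big; apply: eq_big_seq => a Aa.
have a_lt := apery_lt m_gt0 condS mem_lX Aa.
by rewrite -(count_in_progression m_gt0 a_lt) -sumn_count sumnE big_map.
Qed.

End Apery.

Theorem corollary2p10 (S : pred nat) (m c : nat)
  (lP lL lX : seq nat) :
  numerical_semigroup S ->
  is_multiplicity S m ->
  is_conductor S c ->
  uniq lP -> (forall x, (x \in lP) = Pset S x) ->
  uniq lL -> (forall x, (x \in lL) = Lset S c x) ->
  uniq lX -> (forall x, (x \in lX) = Xset S m x) ->
  ((size lP)%:Z * (size lL)%:Z - c%:Z
   = (size lP)%:Z * tau m c lX - (count (Dset S) lX)%:Z * (depth m c)%:Z
     + rho m c)%R.
Proof.
move=> [S0 S_add _] multS condS uniq_lP mem_lP uniq_lL mem_lL uniq_lX mem_lX.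
have m_gt0 : 0 < m by case: multS.
rewrite (size_Lset S0 S_add multS mem_lX condS uniq_lX uniq_lL mem_lL) big_cons subn0.
rewrite (tau_apery m_gt0 condS mem_lX).
have m_split : m = size lP + count (Dset S) lX.
  rewrite (size_Pset S0 multS uniq_lP mem_lP uniq_lX mem_lX) addSn addnC count_predC.
  by rewrite -(size_apery S0 S_add multS mem_lX condS uniq_lX).
rewrite /rho /depth; set q := (c + m - 1) %/ m; set T := \sum_(_ <- _) _.
by rewrite m_split PoszD PoszM PoszD; ring.
Qed.
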